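(* Let $\alpha,\beta,\gamma\in\mathbb{R}$, and let $G_3$ be the connected, simply connected Lie group whose Lie algebra $\mathfrak{g}_3$ has a basis $\{e_1,e_2,e_3\}$ with $[e_1,e_2]=-\gamma e_3$, $[e_1,e_3]=-\beta e_2$, $[e_2,e_3]=\alpha e_1$, equipped with the left-invariant Lorentzian metric $g$ for which $\{e_1,e_2,e_3\}$ is pseudo-orthonormal with $e_3$ timelike, and with the product structure $J$. Let $\lambda_0,c\in\mathbb{R}$. Then there exists a derivation $D$ of $\mathfrak{g}_3$ with $\widetilde{\mathrm{Ric}}^0=(s^0\lambda_0+c)\mathrm{Id}+D$ (i.e. $(G_3,g,J)$ is an algebraic Schouten soliton associated to the canonical connection $\nabla^0$) if and only if one of the following holds: (i) $\alpha=\beta=\gamma=0$ (for all $c$); (ii) $\alpha=\beta=0$, $\gamma\neq0$ and $c=\gamma^2-\gamma^2\lambda_0$; (iii) ($\alpha\neq0$ or $\beta\neq0$), $\gamma=0$ and $c=0$; (iv) ($\alpha\neq0$ or $\beta\neq0$), $\gamma=\alpha+\beta$ and $c=0$.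
   Context: Pseudo-orthonormal means $g(e_1,e_1)=g(e_2,e_2)=1$, $g(e_3,e_3)=-1$, $g(e_i,e_j)=0$ for $i\neq j$; left-invariant tensors are identified with their values on $\mathfrak{g}$. $\nabla$ is the Levi-Civita connection of $g$. The product structure $J$ is the left-invariant endomorphism with $Je_1=e_1$, $Je_2=e_2$, $Je_3=-e_3$. The canonical connection is $\nabla^0_XY=\nabla_XY-\frac12(\nabla_XJ)JY$, and the Kobayashi–Nomizu connection is $\nabla^1_XY=\nabla^0_XY-\frac14[(\nabla_YJ)JX-(\nabla_{JY}J)X]$. For $k=0,1$: $R^k(X,Y)Z=\nabla^k_X\nabla^k_YZ-\nabla^k_Y\nabla^k_XZ-\nabla^k_{[X,Y]}Z$; $\rho^k(X,Y)=-g(R^k(X,e_1)Y,e_1)-g(R^k(X,e_2)Y,e_2)+g(R^k(X,e_3)Y,e_3)$; $\widetilde\rho^k(X,Y)=\frac12(\rho^k(X,Y)+\rho^k(Y,X))$; $\widetilde{\mathrm{Ric}}^k$ is defined by $\widetilde\rho^k(X,Y)=g(\widetilde{\mathrm{Ric}}^k(X),Y)$; and $s^k=\widetilde\rho^k(e_1,e_1)+\widetilde\rho^k(e_2,e_2)-\widetilde\rho^k(e_3,e_3)$. A derivation of $\mathfrak{g}$ is a linear map $D$ with $D[X,Y]=[DX,Y]+[X,DY]$. $(G,g,J)$ is an algebraic Schouten soliton associated to $\nabla^k$ (with real constants $\lambda_0,c$) if $\widetilde{\mathrm{Ric}}^k=(s^k\lambda_0+c)\mathrm{Id}+D$ for some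 derivation $D$. *)

(* the Lie algebra g_3 is R^3 = 'rV[R]_3, R : realType. *)
From HB Require Import structures.
From mathcomp Require Import all_boot all_order all_algebra.
From mathcomp Require Import reals.
Set Implicit Arguments. Unset Strict Implicit. Unset Printing Implicit Defensive.
Import Order.TTheory GRing.Theory Num.Theory.
Local Open Scope ring_scope.

Section G3.
Variable R : realType.
Implicit Types (u v w X Y Z : 'rV[R]_3).

Definition i1 : 'I_3 := @Ordinal 3 0 isT.
Definition i2 : 'I_3 := @Ordinal 3 1 isT.
Definition i3 : 'I_3 := @Ordinal 3 2 isT.

Definition ev (i : 'I_3) : 'rV[R]_3 := delta_mx 0 i.
Definition e1 := ev i1.
Definition e2 := ev i2.
Definition e3 := ev i3.

(* g(e_i,e_i) : +1, +1, -1 (e_3 timelike) *)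
Definition eps (i : 'I_3) : R := if (i : nat) == 2%N then -1 else 1.

Definition gm u v : R := \sum_i eps i * u 0 i * v 0 i.

(* Lie bracket on basis vectors:
   [e1,e2] = -gamma e3, [e1,e3] = -beta e2, [e2,e3] = alpha e1 *)
Definition brb (al be ga : R) (i j : 'I_3) : 'rV[R]_3 :=
  match nat_of_ord i, nat_of_ord j with
  | O, S O => - ga *: e3
  | S O, O => ga *: e3
  | O, S (S O) => - be *: e2
  | S (S O), O => be *: e2
  | S O, S (S O) => al *: e1
  | S (S O), S O => - al *: e1
  | _, _ => 0
  end.

Definition br al be ga u v : 'rV[R]_3 :=
  \sum_i \sum_j (u 0 i * v 0 j) *: brb al be ga i j.

(* Levi-Civita connection on left-invariant fields (Koszul formula):
   2 g(nabla_X Y, Z) = g([X,Y],Z) - g([Y,Z],X) + g([Z,X],Y),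
   and nabla_X Y = sum_k eps_k g(nabla_X Y, e_k) e_k. *)
Definition LC al be ga X Y : 'rV[R]_3 :=
  \sum_k (eps k * ((gm (br al be ga X Y) (ev k)
                   - gm (br al be ga Y (ev k)) X
                   + gm (br al be ga (ev k) X) Y) / 2)) *: ev k.

(* product structure J: J e1 = e1, J e2 = e2, J e3 = - e3 *)
Definition Jm v : 'rV[R]_3 := \row_i (eps i * v 0 i).

Definition nablaJ al be ga X Y : 'rV[R]_3 :=
  LC al be ga X (Jm Y) - Jm (LC al be ga X Y).

Definition nab0 al be ga X Y : 'rV[R]_3 :=
  LC al be ga X Y - (1 / 2) *: nablaJ al be ga X (Jm Y).

Definition R0 al be ga X Y Z : 'rV[R]_3 :=
  nab0 al be ga X (nab0 al be ga Y Z) - nab0 al be ga Y (nab0 al be ga X Z)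
  - nab0 al be ga (br al be ga X Y) Z.

Definition rho0 al be ga X Y : R :=
  - gm (R0 al be ga X e1 Y) e1 - gm (R0 al be ga X e2 Y) e2
  + gm (R0 al be ga X e3 Y) e3.

Definition rhot0 al be ga X Y : R := (rho0 al be ga X Y + rho0 al be ga Y X) / 2.

(* Ricci operator: the unique endomorphism with g(Ric X, Y) = rhot(X,Y) *)
Definition Ric0 al be ga X : 'rV[R]_3 :=
  \sum_k (eps k * rhot0 al be ga X (ev k)) *: ev k.

Definition s0 al be ga : R :=
  rhot0 al be ga e1 e1 + rhot0 al be ga e2 e2 - rhot0 al be ga e3 e3.

(* derivation of g_3; a linear map D is represented by a matrix, X |-> X *m D *)
Definition is_derivation al be ga (D : 'M[R]_3) : Prop :=
  forall X Y, br al be ga X Y *m D = br al be ga (X *m D) Y + br al be ga X (Y *m D).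

Definition schouten_soliton0 al be ga (l0 c : R) : Prop :=
  exists D : 'M[R]_3, is_derivation al be ga D /\
    forall X, Ric0 al be ga X = (s0 al be ga * l0 + c) *: X + X *m D.

End G3.

(* In the pseudo-orthonormal basis the canonical connection only rotates the
   plane <e1, e2>: nabla^0_X Y = h X_3 (Y_2 e1 - Y_1 e2) with
   h = (gamma - alpha - beta) / 2.  Hence Ric^0 is s/2 times the projection
   onto <e1, e2>, where s = s^0 = gamma (gamma - alpha - beta).  The soliton
   equation therefore forces D = Ric^0 - m Id with m = s lambda_0 + c, i.e.
   D = diag(s/2 - m, s/2 - m, -m).  A diagonal map diag(d1, d2, d3) is a
   derivation iff alpha (d1 - d2 - d3) = beta (d2 - d1 - d3)
   = gamma (d3 - d1 - d2) = 0, which here reads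
   alpha m = beta m = gamma (m - s) = 0; splitting into cases on these three
   equations yields (i)-(iv). *)
From HB Require Import structures.
From mathcomp Require Import all_boot all_order all_algebra.
From mathcomp Require Import reals ring.
Import Order.TTheory GRing.Theory Num.Theory.
Local Open Scope ring_scope.

Section G3.
Variable R : realType.

Definition r3 (a b c : R) : 'rV[R]_3 := \row_(i < 3) [:: a; b; c]`_i.

Local Notation "u `1" := (u 0 i1) (at level 2).
Local Notation "u `2" := (u 0 i2) (at level 2).
Local Notation "u `3" := (u 0 i3) (at level 2).

Lemma sum3 (V : nmodType) (f : 'I_3 -> V) : \sum_i f i = f i1 + f i2 + f i3.
Proof.
rewrite !big_ord_recl big_ord0 addr0 addrA.
by congr (f _ + f _ + f _); exact: val_inj.
Qed.

Lemma r3_eta (u : 'rV[R]_3) : u = r3 u`1 u`2 u`3.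
Proof.
apply/rowP => -[[|[|[|//]]] lt_i3]; rewrite mxE /=;
  by rewrite (bool_irrelevance lt_i3 isT).
Qed.

Lemma r3_1 a b c : (r3 a b c)`1 = a. Proof. by rewrite mxE. Qed.
Lemma r3_2 a b c : (r3 a b c)`2 = b. Proof. by rewrite mxE. Qed.
Lemma r3_3 a b c : (r3 a b c)`3 = c. Proof. by rewrite mxE. Qed.

Lemma eq_r3 a b c a' b' c' : a = a' -> b = b' -> c = c' -> r3 a b c = r3 a' b' c'.
Proof. by move=> -> -> ->. Qed.

Lemma r3_eq0 a b c : r3 a b c = 0 <-> [/\ a = 0, b = 0 & c = 0].
Proof.
split=> [r3_0 | [-> -> ->]].
  by split; [rewrite -(r3_1 a b c) | rewrite -(r3_2 a b c) | rewrite -(r3_3 a b c)];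
    rewrite r3_0 mxE.
by apply/rowP => -[[|[|[|//]]] ?]; rewrite !mxE.
Qed.

Lemma r3D a b c a' b' c' : r3 a b c + r3 a' b' c' = r3 (a + a') (b + b') (c + c').
Proof. by apply/rowP => -[[|[|[|//]]] ?]; rewrite !mxE. Qed.

Lemma r3N a b c : - r3 a b c = r3 (- a) (- b) (- c).
Proof. by apply/rowP => -[[|[|[|//]]] ?]; rewrite !mxE. Qed.

Lemma r3Z k a b c : k *: r3 a b c = r3 (k * a) (k * b) (k * c).
Proof. by apply/rowP => -[[|[|[|//]]] ?]; rewrite !mxE. Qed.

Lemma ev1E : ev R i1 = r3 1 0 0. Proof. by apply/rowP => -[[|[|[|//]]] ?]; rewrite !mxE. Qed.
Lemma ev2E : ev R i2 = r3 0 1 0. Proof. by apply/rowP => -[[|[|[|//]]] ?]; rewrite !mxE. Qed.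
Lemma ev3E : ev R i3 = r3 0 0 1. Proof. by apply/rowP => -[[|[|[|//]]] ?]; rewrite !mxE. Qed.

Lemma mul_r3_diag (u : 'rV[R]_3) d1 d2 d3 :
  u *m diag_mx (r3 d1 d2 d3) = r3 (d1 * u`1) (d2 * u`2) (d3 * u`3).
Proof.
by rewrite mul_mx_diag {1}[u]r3_eta; apply/rowP => -[[|[|[|//]]] ?]; rewrite !mxE mulrC.
Qed.

Lemma gmE (u v : 'rV[R]_3) : gm u v = u`1 * v`1 + u`2 * v`2 - u`3 * v`3.
Proof. by rewrite /gm sum3 /eps /=; ring. Qed.

Lemma JmE (u : 'rV[R]_3) : Jm u = r3 u`1 u`2 (- u`3).
Proof.
by rewrite {1}[u]r3_eta; apply/rowP => -[[|[|[|//]]] ?]; rewrite !mxE /eps /= ?mul1r ?mulN1r.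
Qed.

Ltac r3_simpl :=
  rewrite /= /e1 /e2 /e3 ?ev1E ?ev2E ?ev3E;
  repeat progress rewrite ?r3Z ?r3D ?r3N ?r3_1 ?r3_2 ?r3_3 ?scaler0 ?addr0 ?add0r.

Lemma brE (a b g : R) (u v : 'rV[R]_3) : br a b g u v =
  r3 (a * (u`2 * v`3 - u`3 * v`2)) (b * (u`3 * v`1 - u`1 * v`3))
     (- g * (u`1 * v`2 - u`2 * v`1)).
Proof. by rewrite /br !sum3 /brb; r3_simpl; apply: eq_r3; ring. Qed.

Lemma br_eq0P (a b g : R) : (forall u v, br a b g u v = 0) <-> [/\ a = 0, b = 0 & g = 0].
Proof.
split=> [br0 | [-> -> ->] u v]; last by rewrite brE r3_eq0; split; ring.
move: (br0 (e2 R) (e3 R)) (br0 (e3 R) (e1 R)) (br0 (e2 R) (e1 R)).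
rewrite !brE; r3_simpl; rewrite !r3_eq0 => -[a0 _ _] [_ b0 _] [_ _ g0].
by split; [rewrite -a0 | rewrite -b0 | rewrite -g0]; ring.
Qed.

Lemma diag_derivation_defect (al be ga d1 d2 d3 : R) (u v : 'rV[R]_3) :
  let D := diag_mx (r3 d1 d2 d3) in
  br al be ga u v *m D - (br al be ga (u *m D) v + br al be ga u (v *m D)) =
  br (al * (d1 - d2 - d3)) (be * (d2 - d1 - d3)) (ga * (d3 - d1 - d2)) u v.
Proof. by rewrite /= !mul_r3_diag !brE; r3_simpl; apply: eq_r3; ring. Qed.

Lemma diag_derivationP (al be ga d1 d2 d3 : R) :
  is_derivation al be ga (diag_mx (r3 d1 d2 d3)) <->
  [/\ al * (d1 - d2 - d3) = 0, be * (d2 - d1 - d3) = 0 & ga * (d3 - d1 - d2) = 0].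
Proof.
rewrite -br_eq0P; split=> der u v; rewrite -?diag_derivation_defect.
  by rewrite der subrr.
by apply/eqP; rewrite -subr_eq0 diag_derivation_defect der.
Qed.

Variables al be ga : R.

Lemma LCE u v : LC al be ga u v =
  r3 ((ga - be - al) * u`3 * v`2 / 2 + (ga - be + al) * u`2 * v`3 / 2)
     ((- ga + be + al) * u`3 * v`1 / 2 + (- ga - be + al) * u`1 * v`3 / 2)
     ((ga - be + al) * u`2 * v`1 / 2 + (- ga - be + al) * u`1 * v`2 / 2).
Proof. by rewrite /LC sum3 /eps /= !gmE !brE; r3_simpl; apply: eq_r3; ring. Qed.

Lemma nab0E u v :
  nab0 al be ga u v = r3 ((ga - al - be) / 2 * u`3 * v`2) (- (ga - al - be) / 2 * u`3 * v`1) 0.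
Proof.
by rewrite /nab0 /nablaJ !JmE !LCE ?JmE; r3_simpl; apply: eq_r3; field.
Qed.

Lemma rho0E u v : rho0 al be ga u v = ga * (ga - al - be) / 2 * (u`1 * v`1 + u`2 * v`2).
Proof. by rewrite /rho0 /R0 !nab0E !brE !gmE; r3_simpl; field. Qed.

Lemma Ric0E u :
  Ric0 al be ga u = r3 (ga * (ga - al - be) / 2 * u`1) (ga * (ga - al - be) / 2 * u`2) 0.
Proof. by rewrite /Ric0 /rhot0 sum3 /eps /= !rho0E; r3_simpl; apply: eq_r3; field. Qed.

Lemma s0E : s0 al be ga = ga * (ga - al - be).
Proof. by rewrite /s0 /rhot0 !rho0E; r3_simpl; field. Qed.

Lemma schouten_soliton0_iff l0 c :
  let m := s0 al be ga * l0 + c in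
  schouten_soliton0 al be ga l0 c <->
  is_derivation al be ga (diag_mx (r3 (s0 al be ga / 2 - m) (s0 al be ga / 2 - m) (- m))).
Proof.
move=> m; set D := diag_mx _.
have RicE u : Ric0 al be ga u = m *: u + u *m D.
  rewrite Ric0E mul_r3_diag [X in m *: X]r3_eta /m s0E; r3_simpl.
  by apply: eq_r3; field.
split=> [[D' [der RicE']] | der]; last by exists D.
suff -> : D = D' by [].
apply/row_matrixP => i; rewrite !rowE.
by apply: (addrI (m *: 'e_i)); rewrite -RicE -RicE'.
Qed.

End G3.

Lemma soliton_equations_cases (F : idomainType) (al be ga l0 c : F) :
  let m := ga * (ga - al - be) * l0 + c in
  [/\ al * m = 0, be * m = 0 & ga * (m - ga * (ga - al - be)) = 0] <->
  [\/ (al = 0 /\ be = 0 /\ ga = 0),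
      (al = 0 /\ be = 0 /\ ga <> 0 /\ c = ga ^+ 2 - ga ^+ 2 * l0),
      ((al <> 0 \/ be <> 0) /\ ga = 0 /\ c = 0)
    | ((al <> 0 \/ be <> 0) /\ ga = al + be /\ c = 0)].
Proof.
move=> m; split=> [[/eqP alm /eqP bem /eqP gam] | ]; last first.
  by rewrite /m; case=> [[-> [-> ->]] | [-> [-> [_ ->]]] | [_ [-> ->]] | [_ [-> ->]]];
    split; ring.
have c_m : c = m - ga * (ga - al - be) * l0 by rewrite /m; ring.
have [[al0 be0] | al_be_neq0] : al = 0 /\ be = 0 \/ (al <> 0 \/ be <> 0)
  by have [|/eqP] := eqVneq al 0; have [|/eqP] := eqVneq be 0; tauto.
- have [ga0 | ga_neq0] := eqVneq ga 0; [by constructor 1 | constructor 2].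
  move: gam; rewrite mulf_eq0 (negPf ga_neq0) subr_eq0 => /eqP m_s.
  by rewrite c_m m_s al0 be0; do 3!split=> //; [exact/eqP | ring].
- have m0 : m = 0.
    by case: al_be_neq0 => /eqP ne0; [move: alm | move: bem];
      rewrite mulf_eq0 (negPf ne0) => /eqP.
  move: gam; rewrite m0 sub0r mulrN oppr_eq0 !mulf_eq0 orbA orbb subr_eq0.
  rewrite c_m m0 sub0r => /orP[/eqP ga0 | /eqP ga_s].
    by constructor 3; rewrite ga0 !mul0r oppr0.
  constructor 4; do 2!split=> //; rewrite -ga_s; first by rewrite addrC subrK.
  by rewrite subrr mulr0 mul0r oppr0.
Qed.

Theorem theorem4p6 (R : realType) (al be ga l0 c : R) :
  schouten_soliton0 al be ga l0 c <->
  [\/ (al = 0 /\ be = 0 /\ ga = 0),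
      (al = 0 /\ be = 0 /\ ga <> 0 /\ c = ga ^+ 2 - ga ^+ 2 * l0),
      ((al <> 0 \/ be <> 0) /\ ga = 0 /\ c = 0)
    | ((al <> 0 \/ be <> 0) /\ ga = al + be /\ c = 0)].
Proof.
rewrite schouten_soliton0_iff diag_derivationP -soliton_equations_cases s0E /=.
set s := ga * (ga - al - be); set m := s * l0 + c.
have -> : - m - (s / 2 - m) - (s / 2 - m) = m - s by field.
by rewrite subrr sub0r opprK.
Qed.
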